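(* The properties ''$X$ is isomorphic to a subspace of $c_0$'' and ''$X$ is isomorphic to a subspace of $\ell_\infty$'' are open for the Kadets distance: if a Banach space $X$ is isomorphic to a subspace of $c_0$ (respectively of $\ell_\infty$), then there exists $\epsilon>0$ such that every Banach space $Y$ with $d_K(X,Y)<\epsilon$ is isomorphic to a subspace of $c_0$ (respectively of $\ell_\infty$).
   Context: The Kadets distance $d_K(X,Y)$ is the infimum, over all Banach spaces $Z$ and linear isometric embeddings $U:X\to Z$, $V:Y\to Z$, of the Hausdorff distance in $Z$ between $UB_X$ and $VB_Y$, where $B_X,B_Y$ are closed unit balls. *)

From HB Require Import structures.
From mathcomp Require Import all_boot all_order all_algebra.
From mathcomp Require Import all_classical all_reals all_analysis.
Set Implicit Arguments. Unset Strict Implicit. Unset Printing Implicit Defensive.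
Import Order.TTheory GRing.Theory Num.Theory.
Import numFieldNormedType.Exports.
Local Open Scope classical_set_scope.
Local Open Scope ring_scope.

Definition unit_ball {R : realType} (X : normedModType R) : set X :=
  [set x | `|x| <= 1].

Definition pt_set_dist {R : realType} (Z : normedModType R) (a : Z) (B : set Z)
  : \bar R := ereal_inf [set (`|a - b|)%:E | b in B].

Definition hausdorff_dist {R : realType} (Z : normedModType R) (A B : set Z)
  : \bar R :=
  maxe (ereal_sup [set pt_set_dist a B | a in A])
       (ereal_sup [set pt_set_dist b A | b in B]).

Definition lin_isometry {R : realType} (X Z : normedModType R) (U : {linear X -> Z}) :=
  forall x : X, `|U x| = `|x|.

Definition kadets_dist {R : realType} (X Y : completeNormedModType R) : \bar R :=
  ereal_inf [set r | exists (Z : completeNormedModType R)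
                       (U : {linear X -> Z}) (V : {linear Y -> Z}),
                       lin_isometry U /\ lin_isometry V /\
                       r = hausdorff_dist (U @` @unit_ball R X) (V @` @unit_ball R Y)].

Definition sup_norm {R : realType} (f : nat -> R) : \bar R :=
  ereal_sup (range (fun n => (`|f n|)%:E)).

Definition seq_linear {R : realType} (X : normedModType R) (T : X -> nat -> R) :=
  forall (a : R) (x y : X) (n : nat), T (a *: x + y) n = a * T x n + T y n.

Definition sup_norm_iso {R : realType} (X : normedModType R) (T : X -> nat -> R) :=
  exists c C : R, 0 < c /\ 0 < C /\
    forall x : X, ((c * `|x|)%:E <= sup_norm (T x))%E /\
                  (sup_norm (T x) <= (C * `|x|)%:E)%E.

Definition iso_subspace_linf {R : realType} (X : normedModType R) : Prop :=
  exists T : X -> nat -> R, seq_linear T /\ sup_norm_iso T.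

Definition iso_subspace_c0 {R : realType} (X : normedModType R) : Prop :=
  exists T : X -> nat -> R, seq_linear T /\ sup_norm_iso T /\
    forall x : X, T x @ \oo --> (0 : R).

(* Let T embed X into l_oo with c |x| <= ||T x|| <= C |x|, and let X and Y sit
   isometrically in a Banach space Z so that every point of B_Y is eps-close
   to U(B_X).  Extending the coordinate functionals of T from U(X) to Z by
   Hahn-Banach and restricting them to V(Y) gives functionals g_n on Y with
   (c - (c + C) eps) |y| <= sup_n |g_n y| <= C |y|, which settles l_oo.
   When T maps into c_0 one only gets limsup_n |g_n y| <= C eps |y|.  This
   bound is uniform on bounded subsets of finite-dimensional spans, and Y is
   separable, being close to a subspace of c_0.  So if d_0, d_1, ... span a
   dense subspace, each g_n can be corrected by a functional of norm
   <= 2 C eps agreeing with g_n on the span of the first m(n) vectors, where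
   m(n) grows slowly to infinity; the corrected functionals tend to 0
   pointwise and still embed Y isomorphically when eps is small. *)

From HB Require Import structures.
From mathcomp Require Import all_boot all_order all_algebra.
From mathcomp Require Import all_classical all_reals all_analysis.
From mathcomp Require Import ring lra.
Import Order.TTheory GRing.Theory Num.Theory.
Import numFieldNormedType.Exports.
Local Open Scope ring_scope.
Local Open Scope classical_set_scope.
Set Implicit Arguments. Unset Strict Implicit. Unset Printing Implicit Defensive.

Section HahnBanach.
Variables (R : realType) (Z : normedModType R) (K : R).
Hypothesis K_ge0 : 0 <= K.

(* Linear functionals on subspaces of Z, bounded by K times the norm, given by
   their graphs. *)
Definition dominated_graph (G : set (Z * R)) :=
  [/\ G (0, 0),
      forall z r r', G (z, r) -> G (z, r') -> r = r',
      forall a z1 r1 z2 r2, G (z1, r1) -> G (z2, r2) -> G (a *: z1 + z2, a * r1 + r2)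
    & forall z r, G (z, r) -> r <= K * `|z|].

Lemma dominated_graphZ G a z r : dominated_graph G -> G (z, r) -> G (a *: z, a * r).
Proof.
by move=> [G00 _ GD _] Gzr; have := GD a _ _ _ _ Gzr G00; rewrite !addr0.
Qed.

Lemma dominated_graphB G z1 r1 z2 r2 : dominated_graph G ->
  G (z1, r1) -> G (z2, r2) -> G (z2 - z1, r2 - r1).
Proof.
move=> [_ _ GD _] G1 G2; have := GD (-1) _ _ _ _ G1 G2.
by rewrite scaleN1r mulN1r addrC [_ + r2]addrC.
Qed.

Definition admissible_value (G : set (Z * R)) (z0 : Z) (al : R) :=
  forall d r, G (d, r) -> r - K * `|d - z0| <= al /\ al <= K * `|d + z0| - r.

Lemma admissible_value_exists G z0 : dominated_graph G ->
  exists al, admissible_value G z0 al.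
Proof.
move=> [G00 _ GD Gdom].
pose S := [set p.2 - K * `|p.1 - z0| | p in G].
suff Sub d r d' r' : G (d, r) -> G (d', r') ->
    r - K * `|d - z0| <= K * `|d' + z0| - r'.
  have supS : has_sup S.
    split; first by exists (0 - K * `|0 - z0|), (0, 0).
    by exists (K * `|0 + z0| - 0) => _ [[d r] Gdr <-]; exact: Sub Gdr G00.
  exists (sup S) => d r Gdr; split; first by apply: sup_upper_bound => //; exists (d, r).
  by apply: ge_sup; [case: supS | move=> _ [[d1 r1] G1 <-]; exact: Sub G1 Gdr].
move=> G1 G2; have := Gdom _ _ (GD 1 _ _ _ _ G1 G2); rewrite scale1r mul1r.
have : `|d + d'| <= `|d - z0| + `|d' + z0|.
  by rewrite -[d + d'](_ : (d - z0) + (d' + z0) = _) ?ler_normD // addrCA subrK addrC.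
move=> /(ler_wpM2l K_ge0); rewrite mulrDr; lra.
Qed.

Lemma admissible_value_dominated G z0 al d r t : dominated_graph G ->
  admissible_value G z0 al -> G (d, r) -> r + t * al <= K * `|d + t *: z0|.
Proof.
move=> DG al_ok Gdr.
have [t_lt0|t_gt0|->] := ltrgtP t 0; last by rewrite mul0r scale0r !addr0; case: DG => _ _ _; apply.
- have s_gt0 : 0 < - t by rewrite oppr_gt0.
  have [+ _] := al_ok _ _ (dominated_graphZ (- t)^-1 DG Gdr).
  have -> : (- t)^-1 *: d - z0 = (- t)^-1 *: (d + t *: z0).
    by rewrite scalerDr scalerA invrN mulNr (mulVf (ltr0_neq0 t_lt0)) scaleN1r.
  rewrite normrZ gtr0_norm ?invr_gt0 // mulrCA -mulrBr.
  rewrite -(ler_pM2l s_gt0) mulrA divff ?lt0r_neq0 // mul1r; lra.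
- have [_] := al_ok _ _ (dominated_graphZ t^-1 DG Gdr).
  have -> : t^-1 *: d + z0 = t^-1 *: (d + t *: z0).
    by rewrite scalerDr scalerA (mulVf (lt0r_neq0 t_gt0)) scale1r.
  rewrite normrZ gtr0_norm ?invr_gt0 // mulrCA -mulrBr.
  rewrite -(ler_pM2l t_gt0) mulrA divff ?lt0r_neq0 // mul1r; lra.
Qed.

Lemma dominated_graph_extend G z0 : dominated_graph G -> ~ (exists r, G (z0, r)) ->
  exists2 G', dominated_graph G' & G `<=` G' /\ exists r, G' (z0, r).
Proof.
move=> DG z0_out; have [al al_ok] := admissible_value_exists z0 DG.
have [G00 Gfun GD _] := DG.
pose G' := [set (p.1 + t *: z0, p.2 + t * al) | p in G & t in [set: R]].
exists G'; last first.
  split; last by exists al, (0, 0) => //; exists 1 => //; rewrite scale1r mul1r !add0r.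
  by move=> [z r] Gzr; exists (z, r) => //; exists 0 => //; rewrite scale0r mul0r !addr0.
split.
- by exists (0, 0) => //; exists 0 => //; rewrite scale0r mul0r !addr0.
- move=> z r r' [[d1 r1] G1 [t1 _ [<- <-]]] [[d2 r2] G2 [t2 _ [/= E <-]]] /=.
  have [t12|t12] := eqVneq t1 t2.
    by subst t2; move/addIr: E => E; subst d2; rewrite (Gfun _ _ _ G1 G2).
  case: z0_out; exists ((t1 - t2)^-1 * (r2 - r1)).
  have -> : z0 = (t1 - t2)^-1 *: (d2 - d1).
    apply: (@scalerI _ _ (t1 - t2)); first by rewrite subr_eq0.
    rewrite scalerA divff ?subr_eq0 // scale1r scalerBl.
    by apply/eqP; rewrite subr_eq addrAC E addrAC subrr add0r.
  exact: dominated_graphZ DG (dominated_graphB DG G1 G2).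
- move=> a _ _ _ _ [[d1 r1] G1 [t1 _ [<- <-]]] [[d2 r2] G2 [t2 _ [<- <-]]] /=.
  exists (a *: d1 + d2, a * r1 + r2); first exact: GD.
  exists (a * t1 + t2) => //.
  congr pair; first by rewrite scalerDr scalerA scalerDl addrACA.
  by rewrite mulrDr mulrA mulrDl addrACA.
- by move=> z r [[d s] Gds [t _ [<- <-]]]; exact: admissible_value_dominated DG al_ok Gds.
Qed.

Lemma total_dominated_graph G0 : dominated_graph G0 ->
  exists2 M, dominated_graph M & G0 `<=` M /\ forall z, exists r, M (z, r).
Proof.
move=> DG0.
pose T := {G : set (Z * R) | dominated_graph G /\ G0 `<=` G}.
have t0 : T := exist _ G0 (conj DG0 (@subset_refl _ G0)).
pose sub (A B : T) := `[< sval A `<=` sval B >].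
have [M Mmax] : exists M : T, premaximal sub M.
  apply: (ZL_preorder t0) => [A|A B C /asboolP AB /asboolP BC|A Atot].
  - exact/asboolP.
  - by apply/asboolP; exact: subset_trans AB BC.
  have [[g Ag]|nA] := pselect (exists g, A g); last first.
    by exists t0 => s As; case: nA; exists s.
  pose U := \bigcup_(g in A) sval g.
  have [G00 _ _ _] := (svalP g).1.
  have DU : dominated_graph U.
    split; first by exists g.
    - move=> z r r' [g1 A1 H1] [g2 A2 H2].
      have [/asboolP s12|/asboolP s21] := Atot g1 g2 A1 A2.
        by have [_ f _ _] := (svalP g2).1; exact: f (s12 _ H1) H2.
      by have [_ f _ _] := (svalP g1).1; exact: f H1 (s21 _ H2).
    - move=> a z1 r1 z2 r2 [g1 A1 H1] [g2 A2 H2].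
      have [/asboolP s12|/asboolP s21] := Atot g1 g2 A1 A2.
        by exists g2 => //; have [_ _ l _] := (svalP g2).1; exact: l (s12 _ H1) H2.
      by exists g1 => //; have [_ _ l _] := (svalP g1).1; exact: l H1 (s21 _ H2).
    - by move=> z r [g1 _ H1]; have [_ _ _ b] := (svalP g1).1; exact: b H1.
  have G0U : G0 `<=` U by move=> p G0p; exists g => //; exact: (svalP g).2.
  by exists (exist _ U (conj DU G0U)) => s As; apply/asboolP => p sp; exists s.
have [DM G0M] := svalP M.
exists (sval M) => //; split => // z.
apply: contrapT => z_out.
have [G' DG' [MG' [r G'r]]] := dominated_graph_extend DM z_out.
have /asboolP G'M := Mmax (exist _ G' (conj DG' (subset_trans G0M MG'))) (asboolT MG').
by case: z_out; exists r; exact: G'M.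
Qed.

Lemma hahn_banach_graph G0 : dominated_graph G0 -> exists F : {scalar Z},
  (forall z r, G0 (z, r) -> F z = r) /\ forall z, `|F z| <= K * `|z|.
Proof.
move=> /total_dominated_graph [M [M00 Mfun MD Mdom] [G0M Mtot]].
pose F z := xget 0 [set r | M (z, r)].
have MF z : M (z, F z) by exact: xgetPex (Mtot z).
have F_scalar : scalar F.
  by move=> a x y; exact: Mfun (MF (a *: x + y)) (MD a _ _ _ _ (MF x) (MF y)).
pose Fs : {scalar Z} := HB.pack F (GRing.isLinear.Build _ _ _ _ F F_scalar).
exists Fs; split => /= [z r /G0M|z].
  exact: Mfun (MF z).
rewrite ler_norml Mdom // andbT lerNl.
by have := Mdom _ _ (MD (-1) _ _ _ _ (MF z) M00); rewrite !addr0 scaleN1r normrN mulN1r.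
Qed.

Theorem hahn_banach (W : lmodType R) (L : {linear W -> Z}) (f : W -> R) :
  scalar f -> (forall w, `|f w| <= K * `|L w|) ->
  exists F : {scalar Z}, (forall w, F (L w) = f w) /\ forall z, `|F z| <= K * `|z|.
Proof.
move=> f_scalar f_dom.
have fB w w' : f (w - w') = f w - f w'.
  by rewrite -scaleN1r addrC f_scalar mulN1r addrC.
have f_ker w : L w = 0 -> f w = 0.
  move=> Lw0; apply/eqP; rewrite -normr_eq0 eq_le normr_ge0 andbT.
  by rewrite (le_trans (f_dom w)) // Lw0 normr0 mulr0.
pose G0 := [set (L w, f w) | w in [set: W]].
have DG0 : dominated_graph G0.
  split.
  - by exists 0 => //; rewrite linear0 f_ker ?linear0.
  - move=> _ r r' [w _ [<- <-]] [w' _ [Lww' <-]]; apply/eqP; rewrite -subr_eq0 -fB.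
    by rewrite f_ker // linearB Lww' subrr.
  - move=> a _ _ _ _ [w1 _ [<- <-]] [w2 _ [<- <-]].
    by exists (a *: w1 + w2) => //; rewrite linearP f_scalar.
  - by move=> _ _ [w _ [<- <-]]; exact: le_trans (ler_norm _) (f_dom w).
have [F [FG0 F_dom]] := hahn_banach_graph DG0.
by exists F; split => // w; apply: FG0; exists w.
Qed.

End HahnBanach.

Section SupNorm.
Variable R : realType.
Implicit Types (f g h : nat -> R) (M : R).

Lemma abs_le_sup_norm f n : (`|f n|%:E <= sup_norm f)%E.
Proof. by apply: ereal_sup_ubound; exists n. Qed.

Lemma sup_norm_leP f M : (sup_norm f <= M%:E)%E <-> forall n, `|f n| <= M.
Proof.
split=> [f_le n|f_le]; first by rewrite -lee_fin (le_trans (abs_le_sup_norm f n)).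
by apply: ub_ereal_sup => _ [n _ <-]; rewrite lee_fin.
Qed.

Lemma sup_norm_ge_shift h g M k : (M%:E <= sup_norm h)%E ->
  (forall n, `|h n| <= `|g n| + k) -> ((M - k)%:E <= sup_norm g)%E.
Proof.
move=> M_le h_le; case Eg: (sup_norm g) => [s| |]; last 2 first.
- exact: leey.
- by have := abs_le_sup_norm g 0; rewrite Eg.
have /sup_norm_leP g_le : (sup_norm g <= s%:E)%E by rewrite Eg.
have : (sup_norm h <= (s + k)%:E)%E.
  by apply/sup_norm_leP => n; rewrite (le_trans (h_le n)) // lerD2r.
by move=> /(le_trans M_le); rewrite !lee_fin lerBlDr.
Qed.

End SupNorm.

Definition ball_approx {R : realType} {X Y Z : normedModType R}
    (U : X -> Z) (V : Y -> Z) (eps : R) :=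
  forall y, `|y| <= 1 -> exists2 x, `|x| <= 1 & `|V y - U x| < eps.

Lemma kadets_dist_lt_approx (R : realType) (X Y : completeNormedModType R) (eps : R) :
  (kadets_dist X Y < eps%:E)%E ->
  exists (Z : completeNormedModType R) (U : {linear X -> Z}) (V : {linear Y -> Z}),
    [/\ lin_isometry U, lin_isometry V & ball_approx U V eps].
Proof.
move=> /ereal_inf_lt [_ [Z [U [V [U_iso [V_iso ->]]]]]].
rewrite /hausdorff_dist gt_max => /andP [_ VU_lt].
exists Z, U, V; split => // y y_le1.
have : (pt_set_dist (V y) (U @` @unit_ball R X) < eps%:E)%E.
  by apply: le_lt_trans VU_lt; apply: ereal_sup_ubound; exists (V y) => //; exists y.
by move=> /ereal_inf_lt [_ [_ [x x_le1 <-] <-]]; rewrite lte_fin; exists x.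
Qed.

Section Transfer.
Variables (R : realType) (X Y Z : normedModType R).
Variables (U : {linear X -> Z}) (V : {linear Y -> Z}) (eps : R).
Hypotheses (U_iso : lin_isometry U) (V_iso : lin_isometry V).
Hypothesis UV_approx : ball_approx U V eps.

Lemma ball_approx_scaled y : exists2 x, `|x| <= `|y| & `|V y - U x| <= eps * `|y|.
Proof.
have [->|y_neq0] := eqVneq y 0.
  by exists 0; rewrite ?linear0 ?subr0 ?addr0 ?normr0 ?mulr0.
have y_gt0 : 0 < `|y| by rewrite normr_gt0.
have [x x_le1 Vx_close] : exists2 x, `|x| <= 1 & `|V (`|y|^-1 *: y) - U x| < eps.
  by apply: UV_approx; rewrite normrZ normfV normr_id mulVf ?normr_eq0.
exists (`|y| *: x); first by rewrite normrZ normr_id ler_piMr.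
have -> : V y - U (`|y| *: x) = `|y| *: (V (`|y|^-1 *: y) - U x).
  by rewrite !linearZ /= scalerBr scalerA divff ?normr_eq0 // scale1r scalerN.
by rewrite normrZ normr_id mulrC ler_wpM2r ?ltW.
Qed.

Variables (T : X -> nat -> R) (c C : R).
Hypotheses (T_lin : seq_linear T) (c_ge0 : 0 <= c) (C_ge0 : 0 <= C).
Hypothesis T_lb : forall x, ((c * `|x|)%:E <= sup_norm (T x))%E.
Hypothesis T_ub : forall x, (sup_norm (T x) <= (C * `|x|)%:E)%E.

Lemma coordinate_extensions : exists F : nat -> {scalar Z},
  (forall n x, F n (U x) = T x n) /\ forall n z, `|F n z| <= C * `|z|.
Proof.
have ext n : exists F : {scalar Z},
    (forall x, F (U x) = T x n) /\ forall z, `|F z| <= C * `|z|.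
  apply: hahn_banach => // [a x y|x]; first exact: T_lin.
  by rewrite U_iso; move/sup_norm_leP: (T_ub x); apply.
have [F F_ext] := choice ext.
by exists F; split => n; have [] := F_ext n.
Qed.

Variable F : nat -> {scalar Z}.
Hypothesis F_U : forall n x, F n (U x) = T x n.
Hypothesis F_dom : forall n z, `|F n z| <= C * `|z|.

Lemma extension_sup_norm_ge y :
  (((c - (c + C) * eps) * `|y|)%:E <= sup_norm (fun n => F n (V y)))%E.
Proof.
have [x x_le Vx_close] := ball_approx_scaled y.
have x_ge : (1 - eps) * `|y| <= `|x|.
  have := ler_normD (U x) (V y - U x); rewrite addrC subrK U_iso V_iso; lra.
have T_le n : `|T x n| <= `|F n (V y)| + C * (eps * `|y|).
  rewrite -F_U -[U x](subKr (V y)) raddfB /=.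
  by rewrite (le_trans (ler_normB _ _)) // lerD2l (le_trans (F_dom _ _)) ?ler_wpM2l.
apply: le_trans (sup_norm_ge_shift (T_lb x) T_le); rewrite lee_fin.
have : c * ((1 - eps) * `|y|) <= c * `|x| by rewrite ler_wpM2l.
nra.
Qed.

Lemma extension_limsup (T_c0 : forall x, T x @ \oo --> (0 : R)) y eta : 0 < eta ->
  exists N, forall n, (N <= n)%N -> `|F n (V y)| <= C * eps * `|y| + eta.
Proof.
move=> eta_gt0; have [x _ Vx_close] := ball_approx_scaled y.
have /cvgrPdist_le /(_ eta eta_gt0) [N _ T_small] := T_c0 x.
exists N => n /T_small; rewrite sub0r normrN => Tx_small.
rewrite -[V y](subrK (U x)) raddfD /= F_U (le_trans (ler_normD _ _)) // lerD //.
by rewrite -mulrA (le_trans (F_dom _ _)) ?ler_wpM2l.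
Qed.

End Transfer.

(* The 8 makes 2 eps + 1/4 <= 1/2 in the separability argument; c + 3 C
   absorbs the correction of norm 2 C eps made in the c_0 case. *)
Definition kadets_radius {R : realType} (c C : R) := c / (8 * (c + 3 * C)).

Lemma kadets_radius_facts (R : realType) (c C : R) : 0 < c -> 0 < C ->
  let eps := kadets_radius c C in
  [/\ 0 < eps, eps <= 1 / 8, 0 < c - (c + C) * eps & 0 < c - (c + 3 * C) * eps].
Proof.
move=> c_gt0 C_gt0 eps.
have eps_gt0 : 0 < eps by rewrite divr_gt0 // mulr_gt0 //; lra.
have eps_val : (c + 3 * C) * eps = c / 8 by rewrite /eps /kadets_radius; field; lra.
split => //.
- rewrite -(ler_pM2l (_ : 0 < c + 3 * C)); last lra.
  by rewrite eps_val; lra.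
- have : (c + C) * eps <= (c + 3 * C) * eps by rewrite ler_pM2r //; lra.
  lra.
- lra.
Qed.

Theorem iso_subspace_linf_kadets_open (R : realType) (X : completeNormedModType R) :
  iso_subspace_linf X -> exists2 eps : R, 0 < eps &
    forall Y : completeNormedModType R,
      (kadets_dist X Y < eps%:E)%E -> iso_subspace_linf Y.
Proof.
move=> [T [T_lin [c [C [c_gt0 [C_gt0 T_bd]]]]]].
have [T_lb T_ub] := (fun x => (T_bd x).1, fun x => (T_bd x).2).
have [eps_gt0 _ c'_gt0 _] := kadets_radius_facts c_gt0 C_gt0.
set eps := kadets_radius c C in eps_gt0 c'_gt0 *.
exists eps => // Y /kadets_dist_lt_approx [Z [U [V [U_iso V_iso UV]]]].
have [F [F_U F_dom]] := coordinate_extensions U_iso T_lin (ltW C_gt0) T_ub.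
exists (fun y n => F n (V y)); split => [a x y n|]; first by rewrite /= !linearP.
exists (c - (c + C) * eps), C; split=> //; split=> // y; split.
  exact (extension_sup_norm_ge U_iso V_iso UV (ltW c_gt0) (ltW C_gt0) T_lb F_U F_dom y).
by apply/sup_norm_leP => n; rewrite -V_iso.
Qed.

Section Span.
Variables (R : realType) (Y : normedModType R) (d : nat -> Y).

Definition span_comb m (l : nat -> R) : Y := \sum_(j < m) l j *: d j.

Lemma span_comb_is_linear m : linear (span_comb m).
Proof.
move=> a l1 l2; rewrite /span_comb scaler_sumr -big_split /=.
by apply: eq_bigr => j _; rewrite scalerA -scalerDl.
Qed.

HB.instance Definition _ m :=
  GRing.isLinear.Build R (nat -> R) Y *:%R (span_comb m) (span_comb_is_linear m).

Lemma span_comb0 l : span_comb 0 l = 0.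
Proof. by rewrite /span_comb big_ord0. Qed.

Lemma span_comb_recr m l : span_comb m.+1 l = span_comb m l + l m *: d m.
Proof. by rewrite /span_comb big_ord_recr. Qed.

Lemma span_comb_widen m M l : (m <= M)%N ->
  span_comb m l = span_comb M (fun j => if (j < m)%N then l j else 0).
Proof.
move=> le_mM; rewrite /span_comb (big_ord_widen M (fun j => l j *: d j) le_mM) big_mkcond.
by apply: eq_bigr => j _; case: ifP; rewrite ?scale0r.
Qed.

Lemma span_comb_delta p : span_comb p.+1 (fun j => (j == p)%:R) = d p.
Proof.
rewrite span_comb_recr eqxx scale1r /span_comb big1 ?add0r // => j _.
by rewrite ltn_eqF ?scale0r.
Qed.

Lemma span_comb_lin a m1 l1 m2 l2 :
  exists m l, a *: span_comb m1 l1 + span_comb m2 l2 = span_comb m l.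
Proof.
exists (maxn m1 m2), (a *: (fun j => if (j < m1)%N then l1 j else 0)
                      + (fun j => if (j < m2)%N then l2 j else 0)).
by rewrite linearP /= -(span_comb_widen _ (leq_maxl m1 m2)) -(span_comb_widen _ (leq_maxr m1 m2)).
Qed.

Lemma span_comb_coef_le m rho l : (forall l', rho <= `|d m - span_comb m l'|) ->
  `|l m| * rho <= `|span_comb m.+1 l|.
Proof.
move=> d_far; have [->|t_neq0] := eqVneq (l m) 0; first by rewrite normr0 mul0r.
have -> : span_comb m.+1 l = l m *: (d m - span_comb m (- (l m)^-1 *: l)).
  by rewrite span_comb_recr linearZ /= scalerBr scalerA mulrN divff // scaleN1r opprK addrC.
by rewrite normrZ ler_wpM2l.
Qed.

End Span.

Section Separable.
Variables (R : realType) (X Y Z : normedModType R).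
Variables (U : {linear X -> Z}) (V : {linear Y -> Z}) (eps : R).
Hypotheses (U_iso : lin_isometry U) (V_iso : lin_isometry V).
Hypotheses (UV_approx : ball_approx U V eps) (eps_le : eps <= 1 / 8).
Variables (T : X -> nat -> R) (c : R).
Hypotheses (T_lin : seq_linear T) (c_gt0 : 0 < c).
Hypothesis T_lb : forall x, ((c * `|x|)%:E <= sup_norm (T x))%E.
Hypothesis T_c0 : forall x, T x @ \oo --> (0 : R).

Definition grid_close (k : nat) (s : seq int) (x : X) :=
  forall n, `|T x n - (nth 0 s n)%:~R / k.+1%:R| <= k.+1%:R^-1.

Lemma grid_close_exists k x : exists s, grid_close k s x.
Proof.
have K_gt0 : 0 < k.+1%:R :> R by rewrite ltr0n.
have iK_gt0 : 0 < k.+1%:R^-1 :> R by rewrite invr_gt0.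
have /cvgrPdist_le /(_ _ iK_gt0) [N _ Tx_small] := T_c0 x.
exists (mkseq (fun n => Num.floor (T x n * k.+1%:R)) N) => n.
have [n_lt|N_le] := ltnP n N; last first.
  by rewrite nth_default ?size_mkseq // mul0r subr0 -normrN -sub0r Tx_small.
rewrite nth_mkseq // -[X in X - _](mulfK (lt0r_neq0 K_gt0)) -mulrBl normrM normfV.
rewrite (gtr0_norm K_gt0) ler_pdivrMr // mulVf ?lt0r_neq0 // ler_norml.
by have /andP[] := floor_itv (T x n * k.+1%:R); rewrite intrD; lra.
Qed.

Lemma grid_close_near k s x x' : 8 < c * k.+1%:R ->
  grid_close k s x -> grid_close k s x' -> `|x - x'| <= 1 / 4.
Proof.
move=> cK_gt8 x_close x'_close; set K := k.+1%:R : R in cK_gt8 x_close x'_close.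
have K_gt0 : 0 < K by rewrite ltr0n.
have T_le n : `|T (x - x') n| <= 2 / K.
  have -> : T (x - x') n = (T x n - (nth 0 s n)%:~R / K) - (T x' n - (nth 0 s n)%:~R / K).
    by rewrite -scaleN1r addrC T_lin mulN1r; ring.
  rewrite (le_trans (ler_normB _ _)) // (_ : 2 / K = K^-1 + K^-1) ?lerD //.
  by field; rewrite lt0r_neq0.
have : c * `|x - x'| <= 2 / K by rewrite -lee_fin (le_trans (T_lb _)) // sup_norm_leP.
rewrite ler_pdivlMr // => cK_le.
have : 0 <= (c * K - 8) * `|x - x'| by rewrite mulr_ge0 // subr_ge0 ltW.
nra.
Qed.

Definition grid_witness (i : seq int * nat) (y : Y) :=
  `|y| <= 1 /\ exists2 x, `|V y - U x| <= eps & grid_close i.2 i.1 x.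

(* For every grid cell (s, k), enumerated by [unpickle], a point of B_Y, if
   any, whose image is eps-close to the image of some x with T x in the cell. *)
Definition dense_seq (p : nat) : Y :=
  if unpickle p is Some i then xget 0 (grid_witness i) else 0.

Lemma dense_seq_half y : `|y| <= 1 -> exists p, `|y - dense_seq p| <= 1 / 2.
Proof.
move=> y_le1; have [x x_le1 Vx_close] := UV_approx y_le1.
pose k := Num.trunc (8 / c).
have cK_gt8 : 8 < c * k.+1%:R by rewrite mulrC -ltr_pdivrMr ?truncnS_gt.
have [s x_close] := grid_close_exists k x.
have witness : grid_witness (s, k) y by split => //; exists x => //; exact: ltW.
have [_ [x' Vx'_close x'_close]] := xgetPex 0 (ex_intro _ y witness).
exists (pickle (s, k)); rewrite /dense_seq pickleK.
set w := xget 0 _ in Vx'_close *.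
have -> : `|y - w| = `|(V y - U x) + U (x - x') + (U x' - V w)|.
  by rewrite -V_iso !linearB /= !addrA subrK addrNK.
rewrite (le_trans (ler_normD _ _)) // (le_trans (lerD (ler_normD _ _) (lexx _))) //.
rewrite U_iso [`|U x' - _|]distrC.
have := grid_close_near cK_gt8 x_close x'_close; have := ltW Vx_close.
move: Vx'_close eps_le; lra.
Qed.

Lemma dense_seq_geometric k y : `|y| <= 1 ->
  exists m l, `|y - span_comb dense_seq m l| <= 2^-1 ^+ k.
Proof.
elim: k y => [|k IH] y y_le1; first by exists 0%N, 0; rewrite span_comb0 subr0 expr0.
have [p y_close] := dense_seq_half y_le1.
have [|m1 [l1 close1]] := IH (2 *: (y - dense_seq p)).
  by rewrite normrZ ger0_norm // -ler_pdivlMl // mulrC.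
have [m [l comb_eq]] := span_comb_lin dense_seq 2^-1 m1 l1 p.+1 (fun j => (j == p)%:R).
exists m, l; rewrite -comb_eq span_comb_delta exprS.
have -> : y - (2^-1 *: span_comb dense_seq m1 l1 + dense_seq p)
          = 2^-1 *: (2 *: (y - dense_seq p) - span_comb dense_seq m1 l1).
  by rewrite scalerBr scalerA mulVf ?pnatr_eq0 // scale1r opprD addrA addrAC.
by rewrite normrZ ger0_norm ?invr_ge0 // ler_wpM2l ?invr_ge0.
Qed.

Lemma dense_seq_span_dense y eta : 0 < eta ->
  exists m l, `|y - span_comb dense_seq m l| <= eta.
Proof.
move=> eta_gt0; set a := `|y| + 1.
have a_gt0 : 0 < a by rewrite ltr_pwDr.
have ya_le1 : `|a^-1 *: y| <= 1.
  by rewrite normrZ normfV gtr0_norm // ler_pdivrMl // mulr1 lerDl.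
have half_lt1 : `|2^-1 : R| < 1 by rewrite ger0_norm ?invr_ge0 // invf_lt1 ?ltr1n.
have /cvgrPdist_le /(_ (eta / a) (divr_gt0 eta_gt0 a_gt0)) [k _ pow_small] :=
  cvg_expr half_lt1.
have [m [l close]] := dense_seq_geometric k ya_le1.
exists m, (a *: l); rewrite linearZ /=.
rewrite -[y](scalerKV (lt0r_neq0 a_gt0)) -scalerBr normrZ gtr0_norm // -ler_pdivlMl //.
by rewrite mulrC (le_trans close) //; have := pow_small k (leqnn k); rewrite sub0r normrN ger0_norm.
Qed.

End Separable.

Lemma grid_point (R : realType) (M s t : R) : 0 < s -> `|t| <= M ->
  exists2 i : nat, (i <= Num.trunc (2 * M / s))%N & 0 <= t - (i%:R * s - M) <= s.
Proof.
move=> s_gt0; rewrite ler_norml => /andP[Mt_le tM_le].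
have x_ge0 : 0 <= (t + M) / s by apply: divr_ge0; lra.
exists (Num.trunc ((t + M) / s)).
  by apply: le_truncn; rewrite ler_pM2r ?invr_gt0 //; lra.
have /andP[] := truncn_itv x_ge0; rewrite ler_pdivlMr // ltr_pdivrMr // -natr1 mulrDl.
by move=> ? ?; apply/andP; split; lra.
Qed.

Definition level (N : nat -> nat) (n : nat) := \max_(j < n.+1 | (N j <= n)%N) j.

Lemma level_le N n : N 0%N = 0%N -> (N (level N n) <= n)%N.
Proof.
move=> N0; apply: (big_ind (fun j => N j <= n)%N) => [|i j ? ?|i //].
  by rewrite N0.
by rewrite /maxn; case: ltnP.
Qed.

Lemma level_ge N n j : (j <= n)%N -> (N j <= n)%N -> (j <= level N n)%N.
Proof. by rewrite -ltnS => lt_jn le_Njn; exact: (leq_bigmax_cond (Ordinal lt_jn)). Qed.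

Section UniformBound.
Variables (R : realType) (Y : normedModType R) (C delta : R).
Hypotheses (C_ge0 : 0 <= C) (delta_gt0 : 0 < delta).
Variable g : nat -> {scalar Y}.
Hypothesis g_dom : forall n y, `|g n y| <= C * `|y|.
Hypothesis g_limsup : forall y eta, 0 < eta ->
  exists N, forall n, (N <= n)%N -> `|g n y| <= delta * `|y| + eta.

Definition eventually_dominated (A : set Y) (eta : R) :=
  exists N, forall n, (N <= n)%N -> forall y, A y -> `|g n y| <= delta * `|y| + eta.

Lemma eventually_dominated_approx A B b eta eta' :
  (forall y, A y -> exists2 y', B y' & `|y - y'| <= b) ->
  eta + (delta + C) * b <= eta' ->
  eventually_dominated B eta -> eventually_dominated A eta'.
Proof.
move=> AB eta_le [N B_dom]; exists N => n le_Nn y /AB [y' By' yy'_le].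
have y'_le : `|y'| <= `|y| + b.
  have -> : y' = y - (y - y') by rewrite opprB addrC subrK.
  by rewrite (le_trans (ler_normB _ _)) // lerD2l.
have gy'_le := B_dom n le_Nn y' By'.
have gyy'_le : `|g n (y - y')| <= C * b by rewrite (le_trans (g_dom _ _)) ?ler_wpM2l.
have := ler_wpM2l (ltW delta_gt0) y'_le.
have -> : g n y = g n (y - y') + g n y' by rewrite -raddfD subrK.
have := ler_normD (g n (y - y')) (g n y'); lra.
Qed.

Lemma eventually_dominated_bigcup (A : nat -> set Y) K eta :
  (forall i, (i < K)%N -> eventually_dominated (A i) eta) ->
  eventually_dominated (\bigcup_(i < K) A i) eta.
Proof.
elim: K => [|K IH] A_dom; first by exists 0%N => n _ y [].
have [N1 dom1] := IH (fun i lt_iK => A_dom i (ltnW lt_iK)).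
have [N2 dom2] := A_dom K (ltnSn K).
exists (maxn N1 N2) => n; rewrite geq_max => /andP[le1 le2] y [i /= lt_iK Aiy].
move: lt_iK; rewrite ltnS leq_eqVlt => /orP[/eqP eq_iK|lt_iK].
  by apply: dom2 => //; rewrite -eq_iK.
by apply: dom1 => //; exists i.
Qed.

Variable d : nat -> Y.

Definition span_ball (w : Y) m (r : R) : set Y :=
  [set w + span_comb d m l | l in [set l | `|span_comb d m l| <= r]].

Let span_ball_dominated m :=
  forall w r eta, 0 < eta -> eventually_dominated (span_ball w m r) eta.

Lemma span_ball0_dominated : span_ball_dominated 0.
Proof.
move=> w r eta eta_gt0; have [N w_dom] := g_limsup w eta_gt0.
by exists N => n le_Nn _ [l _ <-]; rewrite span_comb0 addr0; apply: w_dom.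
Qed.

Lemma span_ball_dominated_near m :
  (forall b, 0 < b -> exists l, `|d m - span_comb d m l| < b) ->
  span_ball_dominated m -> span_ball_dominated m.+1.
Proof.
move=> d_near IH w r eta eta_gt0.
have dC_gt0 : 0 < delta + C := ltr_wpDr C_ge0 delta_gt0.
pose b := eta / (2 * (delta + C)).
have b_gt0 : 0 < b by rewrite divr_gt0 // mulr_gt0.
apply: (@eventually_dominated_approx _ (span_ball w m (r + b)) b (eta / 2)); last 2 first.
- have -> : (delta + C) * b = eta / 2 by rewrite /b; field; rewrite lt0r_neq0.
  lra.
- by apply: IH; rewrite divr_gt0.
move=> _ [l /= l_le <-]; set t := l m.
have t1_gt0 : 0 < `|t| + 1 by rewrite ltr_pwDr.
have [l' l'_close] := d_near _ (divr_gt0 b_gt0 t1_gt0).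
have diff_le : `|span_comb d m.+1 l - span_comb d m (t *: l' + l)| <= b.
  rewrite span_comb_recr linearP /= opprD addrA addrAC [span_comb d m l + _ - _]addrAC.
  rewrite subrr add0r -scalerBr normrZ.
  rewrite (le_trans (ler_wpM2l (normr_ge0 t) (ltW l'_close))) // mulrCA ger_pMr //.
  by rewrite ler_pdivrMr // mul1r lerDl.
exists (w + span_comb d m (t *: l' + l)); last by rewrite opprD addrACA subrr add0r.
exists (t *: l' + l) => //=; rewrite -[span_comb d m _](subKr (span_comb d m.+1 l)).
by rewrite (le_trans (ler_normB _ _)) // lerD.
Qed.

Lemma span_ball_dominated_far m rho : 0 < rho ->
  (forall l, rho <= `|d m - span_comb d m l|) ->
  span_ball_dominated m -> span_ball_dominated m.+1.
Proof.
move=> rho_gt0 d_far IH w r eta eta_gt0.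
have dC_gt0 : 0 < delta + C := ltr_wpDr C_ge0 delta_gt0.
pose M := `|r| / rho.
pose b := eta / (2 * (delta + C)).
have b_gt0 : 0 < b by rewrite divr_gt0 // mulr_gt0.
pose s := b / (`|d m| + 1).
have s_gt0 : 0 < s by rewrite divr_gt0 // ltr_pwDr.
pose A i := span_ball (w + (i%:R * s - M) *: d m) m (`|r| + M * `|d m|).
pose K := (Num.trunc (2 * M / s)).+1.
apply: (@eventually_dominated_approx _ (\bigcup_(i < K) A i) b (eta / 2)); last 2 first.
- have -> : (delta + C) * b = eta / 2 by rewrite /b; field; rewrite lt0r_neq0.
  lra.
- by apply: eventually_dominated_bigcup => i _; apply: IH; rewrite divr_gt0.
move=> _ [l /= l_le <-]; set t := l m.
have t_le : `|t| <= M.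
  rewrite ler_pdivlMr // (le_trans (@span_comb_coef_le _ _ d m rho l d_far)) //.
  exact: le_trans l_le (ler_norm r).
have [i i_le /andP[ti_le t_le']] := grid_point s_gt0 t_le.
exists (w + span_comb d m l + (i%:R * s - M) *: d m).
  exists i; first by rewrite /= ltnS.
  exists l; last by rewrite addrAC.
  rewrite /= -[span_comb d m l](addrK (t *: d m)) -span_comb_recr.
  rewrite (le_trans (ler_normB _ _)) // normrZ.
  by rewrite lerD ?(le_trans l_le (ler_norm r)) ?ler_wpM2r.
rewrite span_comb_recr addrA opprD addrACA subrr add0r -scalerBl.
rewrite normrZ ger0_norm // (le_trans (ler_wpM2r (normr_ge0 _) t_le')) //.
by rewrite /s mulrAC ler_pdivrMr ?ltr_pwDr // ler_wpM2l ?(ltW b_gt0) // lerDl.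
Qed.

(* Either d m lies in the closure of the previous span, or its coefficient is
   bounded on bounded sets and can be discretized: this is the compactness of
   bounded subsets of a finite-dimensional span that the induction needs. *)
Lemma span_ball_dominated_all m : span_ball_dominated m.
Proof.
elim: m => [|m IH]; first exact: span_ball0_dominated.
have [[rho rho_gt0 d_far]|d_not_far] :=
  pselect (exists2 rho, 0 < rho & forall l, rho <= `|d m - span_comb d m l|).
  exact: span_ball_dominated_far rho_gt0 d_far IH.
apply: span_ball_dominated_near IH => b b_gt0; apply: contrapT => no_l.
by apply: d_not_far; exists b => // l; rewrite leNgt; apply/negP => lt_b; apply: no_l; exists l.
Qed.

Lemma eventually_span_dominated m : exists N, forall n, (N <= n)%N ->
  forall l, `|g n (span_comb d m l)| <= 2 * delta * `|span_comb d m l|.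
Proof.
have [N dom] := span_ball_dominated_all m 0 1 delta_gt0.
exists N => n le_Nn l; set u := span_comb d m l.
have [->|u_neq0] := eqVneq u 0; first by rewrite raddf0 !normr0 mulr0.
have u_gt0 : 0 < `|u| by rewrite normr_gt0.
have unit_u : `|(`|u|^-1 *: u)| = 1 by rewrite normrZ normfV normr_id mulVf ?normr_eq0.
have := dom n le_Nn (`|u|^-1 *: u).
rewrite unit_u linearZ /= normrM normfV normr_id mulr1 -ler_pdivlMl ?invr_gt0 // invrK.
have -> : `|u| * (delta + delta) = 2 * delta * `|u| by ring.
by apply; exists (`|u|^-1 *: l); rewrite /= ?add0r linearZ ?unit_u.
Qed.

Hypothesis d_dense : forall y eta, 0 < eta -> exists m l, `|y - span_comb d m l| <= eta.

Lemma c0_perturbation : exists h : nat -> {scalar Y},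
  [/\ forall n y, `|h n y| <= (C + 2 * delta) * `|y|,
      forall n y, `|g n y| <= `|h n y| + 2 * delta * `|y|
    & forall y, h^~ y @ \oo --> (0 : R)].
Proof.
have [N N_dom] := choice eventually_span_dominated.
pose N0 m := if m is 0 then 0%N else N m.
pose lv := level N0.
have lv_dom n l : `|g n (span_comb d (lv n) l)| <= 2 * delta * `|span_comb d (lv n) l|.
  have := @level_le N0 n erefl; rewrite -/(lv n).
  case: (lv n) => [_|m /N_dom]; last exact.
  by rewrite span_comb0 raddf0 !normr0 mulr0.
have delta2_ge0 : 0 <= 2 * delta by rewrite mulr_ge0 ?ltW.
(* h n := g n - k n will vanish on the span of the first [lv n] vectors. *)
have ext n : exists kn : {scalar Y},
    (forall l, kn (span_comb d (lv n) l) = g n (span_comb d (lv n) l)) /\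
    forall y, `|kn y| <= 2 * delta * `|y|.
  apply: (@hahn_banach _ _ _ delta2_ge0 _ (span_comb d (lv n))
    (fun l => g n (span_comb d (lv n) l)) _ (lv_dom n)).
  by move=> a x y; rewrite /= !linearP.
have [k k_spec] := choice ext.
have h_dom n y : `|(g n \- k n) y| <= (C + 2 * delta) * `|y|.
  by rewrite mulrDl (le_trans (ler_normB _ _)) // lerD // (k_spec n).2.
exists (fun n => g n \- k n); split => // [n y|y].
  by rewrite -[g n y](subrK (k n y)) (le_trans (ler_normD _ _)) // lerD2l (k_spec n).2.
apply/cvgrPdist_le => eta eta_gt0.
have C2_gt0 : 0 < C + 2 * delta by rewrite ltr_wpDl // mulr_gt0.
have [m [l y_close]] := d_dense y (divr_gt0 eta_gt0 C2_gt0).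
exists (maxn m (N m)) => // n; rewrite /= geq_max => /andP[le_mn le_Nmn].
have le_m_lv : (m <= lv n)%N.
  by apply: level_ge => //; apply: leq_trans le_Nmn; case: (m).
have -> : g n y - k n y = (g n \- k n) (y - span_comb d m l).
  by rewrite raddfB /= (span_comb_widen _ _ le_m_lv) (k_spec n).1 subrr subr0.
by rewrite sub0r normrN (le_trans (h_dom _ _)) // -ler_pdivlMl // mulrC.
Qed.

End UniformBound.

Theorem iso_subspace_c0_kadets_open (R : realType) (X : completeNormedModType R) :
  iso_subspace_c0 X -> exists2 eps : R, 0 < eps &
    forall Y : completeNormedModType R,
      (kadets_dist X Y < eps%:E)%E -> iso_subspace_c0 Y.
Proof.
move=> [T [T_lin [[c [C [c_gt0 [C_gt0 T_bd]]]] T_c0]]].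
have [T_lb T_ub] := (fun x => (T_bd x).1, fun x => (T_bd x).2).
have [eps_gt0 eps_le _ c'_gt0] := kadets_radius_facts c_gt0 C_gt0.
set eps := kadets_radius c C in eps_gt0 eps_le c'_gt0 *.
exists eps => // Y /kadets_dist_lt_approx [Z [U [V [U_iso V_iso UV]]]].
have [F [F_U F_dom]] := coordinate_extensions U_iso T_lin (ltW C_gt0) T_ub.
have g_dom n y : `|(F n \o V) y| <= C * `|y| by rewrite /= -V_iso.
have g_limsup := extension_limsup UV (ltW C_gt0) F_U F_dom T_c0.
have dense := dense_seq_span_dense U_iso V_iso UV eps_le T_lin c_gt0 T_lb T_c0.
have Ceps_gt0 : 0 < C * eps by rewrite mulr_gt0.
have [h [h_dom g_le h_c0]] := c0_perturbation (ltW C_gt0) Ceps_gt0 g_dom g_limsup dense.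
exists (fun y n => h n y); split=> [a x y n|]; first by rewrite linearP.
split=> //; exists (c - (c + 3 * C) * eps), (C + 2 * (C * eps)).
split=> //; split=> [|y]; first by rewrite ltr_wpDr // mulr_ge0 ?ltW.
split; last by apply/sup_norm_leP => n; exact: h_dom.
have g_ge := extension_sup_norm_ge U_iso V_iso UV (ltW c_gt0) (ltW C_gt0) T_lb F_U F_dom y.
have -> : (c - (c + 3 * C) * eps) * `|y|
          = (c - (c + C) * eps) * `|y| - 2 * (C * eps) * `|y| by ring.
exact: sup_norm_ge_shift g_ge (g_le^~ y).
Qed.

Theorem proposition5p2 (R : realType) (X : completeNormedModType R) :
  (iso_subspace_c0 X ->
     exists eps : R, 0 < eps /\
       forall Y : completeNormedModType R,
         (kadets_dist X Y < eps%:E)%E -> iso_subspace_c0 Y) /\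
  (iso_subspace_linf X ->
     exists eps : R, 0 < eps /\
       forall Y : completeNormedModType R,
         (kadets_dist X Y < eps%:E)%E -> iso_subspace_linf Y).
Proof.
split=> [/iso_subspace_c0_kadets_open|/iso_subspace_linf_kadets_open] [eps eps_gt0 open];
  by exists eps.
Qed.
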